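(* Let $\{E^{(f)}\}_{f\in\mathcal F}$ be a finite family of linear operators on $\mathbb{C}^2$ (describing Eve's action on Bob's qubit), and define the (unnormalized) two-qubit state $$\rho=\sum_{k=0}^{3}\sum_{f\in\mathcal F}\big(I_A\otimes F R^{-k}E^{(f)}R^{k}\big)|\Psi\rangle\langle\Psi|\big(I_A\otimes F R^{-k}E^{(f)}R^{k}\big)^\dagger ,$$ where $|\Psi\rangle=\frac{1}{\sqrt2}\big(|0_z\rangle_A|\varphi_0\rangle_B+|1_z\rangle_A|\varphi_1\rangle_B\big)$. Assume $\operatorname{Tr}\rho>0$ and set $p_X=\langle\Psi^+|\rho|\Psi^+\rangle/\operatorname{Tr}\rho$, $p_Z=\langle\Phi^-|\rho|\Phi^-\rangle/\operatorname{Tr}\rho$, $p_Y=\langle\Psi^-|\rho|\Psi^-\rangle/\operatorname{Tr}\rho$. Let $e_b=p_X+p_Y$ (the bit error rate) and $a=p_Y$. Then $$p_X=e_b-a,\qquad p_Z=\tfrac32 e_b-a,\qquad p_Y=a,$$ and $e_b/2\le a\le e_b$.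
   Context: Qubits use two orthonormal bases related by $|0_x\rangle=(|0_z\rangle+|1_z\rangle)/\sqrt2$, $|1_x\rangle=(|0_z\rangle-|1_z\rangle)/\sqrt2$. Let $\alpha=\sin(\pi/8)$, $\beta=\cos(\pi/8)$, $|\varphi_0\rangle=\beta|0_x\rangle+\alpha|1_x\rangle$, $R=\cos(\pi/4)I+\sin(\pi/4)\big(|1_x\rangle\langle 0_x|-|0_x\rangle\langle 1_x|\big)$ and $|\varphi_m\rangle=R^{-m}|\varphi_0\rangle$ for $m=0,\dots,3$. The filtering operator is $F=\sin(\pi/8)|0_x\rangle\langle0_x|+\cos(\pi/8)|1_x\rangle\langle1_x|$. The Bell states are $|\Phi^\pm\rangle=(|0_z0_z\rangle\pm|1_z1_z\rangle)/\sqrt2$ and $|\Psi^\pm\rangle=(|0_z1_z\rangle\pm|1_z0_z\rangle)/\sqrt2$; $p_X,p_Y,p_Z$ are the probabilities of bit-flip, bit-and-phase-flip, and phase-flip errors relative to $|\Phi^+\rangle$. *)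

From HB Require Import structures.
From mathcomp Require Import all_boot all_order all_algebra.
From mathcomp Require Import all_classical all_reals.
From mathcomp Require Import interval_inference topology normedtype sequences exp trigo.
From mathcomp Require Import complex mxtens.
Set Implicit Arguments. Unset Strict Implicit. Unset Printing Implicit Defensive.
Import Order.TTheory GRing.Theory Num.Theory.
Local Open Scope ring_scope.
Local Open Scope complex_scope.

Section QKD.
Variable R : realType.
Local Notation C := R[i].

Definition rc (x : R) : C := x%:C.

Definition adj {m n} (A : 'M[C]_(m, n)) : 'M[C]_(n, m) := (map_mx conjc A)^T.

Definition ket0z : 'cV[C]_2 := delta_mx 0 0.
Definition ket1z : 'cV[C]_2 := delta_mx 1 0.
Definition ket0x : 'cV[C]_2 := rc (Num.sqrt 2)^-1 *: (ket0z + ket1z).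
Definition ket1x : 'cV[C]_2 := rc (Num.sqrt 2)^-1 *: (ket0z - ket1z).

Definition alpha : R := sin (pi / 8).
Definition beta : R := cos (pi / 8).

Definition phi0 : 'cV[C]_2 := rc beta *: ket0x + rc alpha *: ket1x.

Definition Rot : 'M[C]_2 :=
  rc (cos (pi / 4)) *: 1%:M
  + rc (sin (pi / 4)) *: (ket1x *m adj ket0x - ket0x *m adj ket1x).

Definition phi (m : nat) : 'cV[C]_2 := (Rot ^- m) *m phi0.

Definition Filt : 'M[C]_2 :=
  rc (sin (pi / 8)) *: (ket0x *m adj ket0x) + rc (cos (pi / 8)) *: (ket1x *m adj ket1x).

(* two-qubit vectors, system A first *)
Definition PsiAB : 'M[C]_(2 * 2, 1 * 1) :=
  rc (Num.sqrt 2)^-1 *: (ket0z *t phi 0 + ket1z *t phi 1).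

Definition PhiP : 'M[C]_(2 * 2, 1 * 1) := rc (Num.sqrt 2)^-1 *: (ket0z *t ket0z + ket1z *t ket1z).
Definition PhiM : 'M[C]_(2 * 2, 1 * 1) := rc (Num.sqrt 2)^-1 *: (ket0z *t ket0z - ket1z *t ket1z).
Definition PsiP : 'M[C]_(2 * 2, 1 * 1) := rc (Num.sqrt 2)^-1 *: (ket0z *t ket1z + ket1z *t ket0z).
Definition PsiM : 'M[C]_(2 * 2, 1 * 1) := rc (Num.sqrt 2)^-1 *: (ket0z *t ket1z - ket1z *t ket0z).

Definition rho (I : finType) (E : I -> 'M[C]_2) : 'M[C]_(2 * 2) :=
  \sum_(k < 4) \sum_(f : I)
    let K := (1%:M : 'M[C]_2) *t (Filt *m Rot ^- k *m E f *m Rot ^+ k) in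
    K *m (PsiAB *m adj PsiAB) *m adj K.

Definition expect {n} (v : 'cV[C]_n) (M : 'M[C]_n) : C := (adj v *m M *m v) 0 0.

End QKD.

(* For a Bell vector v = (|0_z> x0 + |1_z> x1)/sqrt 2, the amplitude
   <v| (I ⊗ F R^-k M R^k) |Psi> equals tr (M R^k G R^-k) / 2, where
   G = (phi_0 x0^† + phi_1 x1^†) F depends neither on k nor on M.  Writing
   G = x σ_x + y σ_z + z iσ_y, conjugation by R turns (x, y) by a quarter turn
   and fixes z, so after summing over k the cross terms cancel and
   <v|rho|v> = (x^2 + y^2)/2 weightXZ + z^2 weightY, with nonnegative weights
   that depend only on Eve's operators.  For Psi+, Psi- and Phi- one finds
   (x, y, z) = (1/2, 0, 0), (0, -1/2, 1/sqrt 2) and (0, 1/sqrt 2, -1/2), so the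
   three expectations are weightXZ/8, weightXZ/8 + weightY/2 and
   (weightXZ + weightY)/4, and the theorem follows by linear algebra. *)

From mathcomp Require Import all_boot all_order all_algebra.
From mathcomp Require Import reals.
From mathcomp Require Import trigo.
From mathcomp Require Import complex mxtens.
From mathcomp Require Import ring lra.
Set Implicit Arguments. Unset Strict Implicit. Unset Printing Implicit Defensive.
Import Order.TTheory GRing.Theory Num.Theory.
Local Open Scope ring_scope.

Section PiEighth.
Variable R : realType.
Local Notation s := ((Num.sqrt 2)^-1 : R).
Local Notation a := (alpha R).
Local Notation b := (beta R).

Lemma sqr_invsqrt2 : s ^+ 2 = 2^-1.
Proof. by rewrite exprVn sqr_sqrtr. Qed.

Lemma cos_piquarter : cos (pi / 4) = s.
Proof.
have cos_gt0 : 0 < cos (pi / 4 : R).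
  by apply: cos_gt0_pihalf; have := pi_gt0 R => ?; apply/andP; split; lra.
have cos_sqr : cos (pi / 4 : R) ^+ 2 = 2^-1.
  have pi_half : (pi / 4 : R) *+ 2 = pi / 2 by rewrite mulr2n; lra.
  by have := cos_mulr2n (pi / 4 : R); rewrite pi_half cos_pihalf; lra.
by rewrite -sqrtrV // -cos_sqr sqrtr_sqr gtr0_norm.
Qed.

Lemma sin_piquarter : sin (pi / 4) = s.
Proof.
by rewrite -cosBpihalf (_ : _ - _ = - (pi / 4)) ?cosN ?cos_piquarter //; lra.
Qed.

Lemma pi_eighth_mulr2n : (pi / 8 : R) *+ 2 = pi / 4.
Proof. by rewrite mulr2n; lra. Qed.

Lemma alpha2Dbeta2 : a ^+ 2 + b ^+ 2 = 1.
Proof. by rewrite addrC cos2Dsin2. Qed.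

Lemma beta2Balpha2 : b ^+ 2 - a ^+ 2 = s.
Proof.
have := cos_mulr2n (pi / 8 : R); rewrite pi_eighth_mulr2n cos_piquarter => ->.
by have := alpha2Dbeta2; rewrite /alpha /beta; lra.
Qed.

Lemma alphaMbeta_mulr2n : a * b *+ 2 = s.
Proof.
have := sin_mulr2n (pi / 8 : R).
by rewrite pi_eighth_mulr2n sin_piquarter mulrC.
Qed.

Lemma invsqrt2_betaDalpha : s * (b + a) = b.
Proof.
transitivity ((b ^+ 2 - a ^+ 2) * b + (a * b *+ 2) * a).
  by rewrite beta2Balpha2 alphaMbeta_mulr2n mulrDr mulrC [s * _]mulrC.
by rewrite -[RHS]mul1r -alpha2Dbeta2; ring.
Qed.

Lemma invsqrt2_betaBalpha : s * (b - a) = a.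
Proof.
transitivity ((a * b *+ 2) * b - (b ^+ 2 - a ^+ 2) * a).
  by rewrite beta2Balpha2 alphaMbeta_mulr2n mulrBr mulrC [s * _]mulrC.
by rewrite -[RHS]mul1r -alpha2Dbeta2; ring.
Qed.

End PiEighth.

Lemma big_ord2 (V : nmodType) (F : 'I_2 -> V) : \sum_(i < 2) F i = F 0 + F 1.
Proof. by rewrite big_ord_recl big_ord1; congr (_ + F _); exact/val_inj. Qed.

Lemma ord2P (i : 'I_2) : i = 0 \/ i = 1.
Proof. by case: i => [[|[|//]]] ?; [left | right]; apply: val_inj. Qed.

Lemma tensmxN (K : pzRingType) m n p q (A : 'M[K]_(m, n)) (B : 'M[K]_(p, q)) :
  A *t - B = - (A *t B).
Proof. by apply/matrixP => i j; rewrite !mxE mulrN. Qed.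

Lemma conjCD (F : numClosedFieldType) (x y : F) : (x + y)^* = x^* + y^*.
Proof. exact: rmorphD. Qed.

Lemma conjCN (F : numClosedFieldType) (x : F) : (- x)^* = - x^*.
Proof. exact: rmorphN. Qed.

Lemma conjCM (F : numClosedFieldType) (x y : F) : (x * y)^* = x^* * y^*.
Proof. exact: rmorphM. Qed.

Ltac mx2_entries := apply/matrixP; intros i j;
  rewrite !mxE ?big_ord2 ?big_ord1 ?mxE;
  destruct (ord2P i) as [-> | ->]; try destruct (ord2P j) as [-> | ->];
  rewrite ?ord1 //=.

Section TwoByTwo.
Variable K : pzRingType.

Definition mx2 (x00 x01 x10 x11 : K) : 'M[K]_2 :=
  \matrix_(i, j) if i == 0 then (if j == 0 then x00 else x01)
                 else (if j == 0 then x10 else x11).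

Definition cv2 (x0 x1 : K) : 'cV[K]_2 := \col_i if i == 0 then x0 else x1.

Lemma mx2_eta (M : 'M[K]_2) : M = mx2 (M 0 0) (M 0 1) (M 1 0) (M 1 1).
Proof. by mx2_entries. Qed.

Lemma mx2_1 : 1%:M = mx2 1 0 0 1.
Proof. by mx2_entries. Qed.

Lemma mx2_add a b c d a' b' c' d' :
  mx2 a b c d + mx2 a' b' c' d' = mx2 (a + a') (b + b') (c + c') (d + d').
Proof. by mx2_entries. Qed.

Lemma mx2_opp a b c d : - mx2 a b c d = mx2 (- a) (- b) (- c) (- d).
Proof. by mx2_entries. Qed.

Lemma mx2_scale k a b c d : k *: mx2 a b c d = mx2 (k * a) (k * b) (k * c) (k * d).
Proof. by mx2_entries. Qed.

Lemma mx2_mul a b c d a' b' c' d' :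
  mx2 a b c d *m mx2 a' b' c' d'
  = mx2 (a * a' + b * c') (a * b' + b * d') (c * a' + d * c') (c * b' + d * d').
Proof. by mx2_entries. Qed.

Lemma mx2_mul_cv2 a b c d x y :
  mx2 a b c d *m cv2 x y = cv2 (a * x + b * y) (c * x + d * y).
Proof. by mx2_entries. Qed.

Lemma cv2_add x y x' y' : cv2 x y + cv2 x' y' = cv2 (x + x') (y + y').
Proof. by mx2_entries. Qed.

Lemma cv2_opp x y : - cv2 x y = cv2 (- x) (- y).
Proof. by mx2_entries. Qed.

Lemma cv2_scale k x y : k *: cv2 x y = cv2 (k * x) (k * y).
Proof. by mx2_entries. Qed.

Lemma mxtrace_mx2 a b c d : \tr (mx2 a b c d) = a + d.
Proof. by rewrite /mxtrace big_ord2 !mxE. Qed.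

End TwoByTwo.

Section Twirl.
Variable R : realType.
Local Notation C := R[i].
Local Notation s := ((Num.sqrt 2)^-1 : R).
Local Notation a := (alpha R).
Local Notation b := (beta R).

Lemma conjC_rc (x : R) : (rc x)^* = rc x.
Proof. exact: conjc_real. Qed.

Lemma rc_invsqrt2_sqr : rc s * rc s = 2^-1 :> C.
Proof. by rewrite /rc -rmorphM -expr2 sqr_invsqrt2 fmorphV rmorph_nat. Qed.

Lemma adjM m n p (A : 'M[C]_(m, n)) (B : 'M[C]_(n, p)) :
  adj (A *m B) = adj B *m adj A.
Proof. by rewrite /adj map_mxM trmx_mul. Qed.

Lemma adjK m n (A : 'M[C]_(m, n)) : adj (adj A) = A.
Proof. by apply/matrixP => i j; rewrite !mxE conjcK. Qed.

Lemma adjD m n (A B : 'M[C]_(m, n)) : adj (A + B) = adj A + adj B.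
Proof. by apply/matrixP => i j; rewrite !mxE rmorphD. Qed.

Lemma adjZ_rc m n x (A : 'M[C]_(m, n)) : adj (rc x *: A) = rc x *: adj A.
Proof.
by apply/matrixP => i j; rewrite !mxE rmorphM; congr (_ * _); exact: conjc_real.
Qed.

Lemma adj_tens m n p q (A : 'M[C]_(m, n)) (B : 'M[C]_(p, q)) :
  adj (A *t B) = adj A *t adj B.
Proof. by apply/matrixP => i j; rewrite !mxE rmorphM. Qed.

Lemma adj_delta (i : 'I_2) : adj (delta_mx i 0 : 'cV[C]_2) = delta_mx 0 i.
Proof. by apply/matrixP => j k; rewrite !mxE conjc_nat andbC. Qed.

Lemma cv2_outer (x y u v : C) :
  cv2 x y *m adj (cv2 u v) = mx2 (x * conjc u) (x * conjc v) (y * conjc u) (y * conjc v).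
Proof. by mx2_entries. Qed.

Lemma invsqrt2_outer (u v : 'cV[C]_2) :
  (rc s *: u) *m adj (rc s *: v) = 2^-1 *: (u *m adj v).
Proof. by rewrite adjZ_rc -scalemxAl -scalemxAr scalerA rc_invsqrt2_sqr. Qed.

Lemma expect_sum n (J : finType) (v : 'cV[C]_n) (F : J -> 'M[C]_n) :
  expect v (\sum_j F j) = \sum_j expect v (F j).
Proof. by rewrite /expect mulmx_sumr mulmx_suml summxE. Qed.

Lemma expect_sandwich n (v P : 'cV[C]_n) (K : 'M[C]_n) :
  expect v (K *m (P *m adj P) *m adj K) = `|(adj v *m K *m P) 0 0| ^+ 2.
Proof.
rewrite normCK /expect.
have -> : adj v *m (K *m (P *m adj P) *m adj K) *m v
          = (adj v *m K *m P) *m adj (adj v *m K *m P).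
  by rewrite !adjM adjK !mulmxA.
by rewrite mxE big_ord1 !mxE.
Qed.

Lemma bell_amplitude (x0 x1 : 'cV[C]_2) (N : 'M[C]_2) :
  (adj (rc s *: (ket0z R *t x0 + ket1z R *t x1)) *m (1%:M *t N) *m PsiAB R) 0 0
  = 2^-1 * \tr (N *m (phi R 0 *m adj x0 + phi R 1 *m adj x1)).
Proof.
rewrite /PsiAB; move: (phi R 0) (phi R 1) => u0 u1.
rewrite adjZ_rc -!scalemxAl -scalemxAr scalerA mxE rc_invsqrt2_sqr; congr (_ * _).
rewrite adjD !adj_tens !mulmxDl !mulmxDr !tensmx_mul !mulmx1 /ket0z /ket1z !adj_delta.
rewrite !mul_delta_mx !mul_delta_mx_0 // !tens0mx addr0 add0r.
rewrite /mxtrace !mxE !(ord1 (_.1)) !(ord1 (_.2)) eqxx !big_ord2 !mxE.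
by rewrite !big_ord2 !mxE !big_ord1 !mxE /=; ring.
Qed.

Lemma ket0zE : ket0z R = cv2 1 0.
Proof. by mx2_entries. Qed.

Lemma ket1zE : ket1z R = cv2 0 1.
Proof. by mx2_entries. Qed.

Lemma ket0xE : ket0x R = rc s *: cv2 1 1.
Proof. by rewrite /ket0x ket0zE ket1zE cv2_add addr0 add0r. Qed.

Lemma ket1xE : ket1x R = rc s *: cv2 1 (- 1).
Proof. by rewrite /ket1x ket0zE ket1zE cv2_opp cv2_add oppr0 addr0 add0r. Qed.

Lemma FiltE :
  Filt R = mx2 (rc ((a + b) / 2)) (rc ((a - b) / 2)) (rc ((a - b) / 2)) (rc ((a + b) / 2)).
Proof.
rewrite /Filt -/(alpha R) -/(beta R) ket0xE ket1xE !invsqrt2_outer !cv2_outer.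
rewrite conjc1 rmorphN1 !(mx2_scale, mx2_add) /rc.
by congr mx2; field.
Qed.

Lemma RotE : Rot R = rc s *: mx2 1 1 (- 1) 1.
Proof.
rewrite /Rot cos_piquarter sin_piquarter ket0xE ket1xE !invsqrt2_outer !cv2_outer.
rewrite conjc1 rmorphN1 mx2_1 !(mx2_scale, mx2_opp, mx2_add).
(* abstracting [rc s] keeps [field] from asking for [Num.sqrt 2 != 0] *)
by move: (rc s) => r; congr mx2; field.
Qed.

Lemma RotV : (Rot R)^-1 = rc s *: mx2 1 (- 1) 1 1.
Proof.
have scale_half (A B : 'M[C]_2) : A * B = 2%:R *: 1%:M -> rc s *: A * (rc s *: B) = 1.
  move=> AB; rewrite -scalerAl -scalerAr scalerA rc_invsqrt2_sqr AB scalerA.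
  by rewrite mulVf ?scale1r // pnatr_eq0.
have RV : Rot R * (rc s *: mx2 1 (- 1) 1 1) = 1.
  by rewrite RotE scale_half // -mulmxE mx2_mul mx2_1 mx2_scale; congr mx2; ring.
have VR : rc s *: mx2 1 (- 1) 1 1 * Rot R = 1.
  by rewrite RotE scale_half // -mulmxE mx2_mul mx2_1 mx2_scale; congr mx2; ring.
have Ru : Rot R \is a GRing.unit by apply/unitrP; exists (rc s *: mx2 1 (- 1) 1 1).
by rewrite -[RHS](mulKr Ru) RV mulr1.
Qed.

Lemma phi0E : phi0 R = cv2 (rc b) (rc a).
Proof.
transitivity (cv2 (rc (s * (b + a))) (rc (s * (b - a)))).
  rewrite /phi0 -/(alpha R) -/(beta R) ket0xE ket1xE !cv2_scale cv2_add /rc.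
  by congr cv2; ring.
by rewrite invsqrt2_betaDalpha invsqrt2_betaBalpha.
Qed.

Lemma phi_0E : phi R 0 = cv2 (rc b) (rc a).
Proof. by rewrite /phi expr0 invr1 mul1mx phi0E. Qed.

Lemma phi_1E : phi R 1 = cv2 (rc a) (rc b).
Proof.
rewrite /phi expr1 RotV phi0E -scalemxAl mx2_mul_cv2 cv2_scale.
transitivity (cv2 (rc (s * (b - a))) (rc (s * (b + a)))).
  by rewrite /rc; congr cv2; ring.
by rewrite invsqrt2_betaDalpha invsqrt2_betaBalpha.
Qed.

(* [bloch x y z] is x σ_x + y σ_z + z iσ_y in the z basis. *)
Definition bloch (x y z : C) : 'M[C]_2 := mx2 y (x + z) (x - z) (- y).

Definition bell_kernel (x0 x1 : 'cV[C]_2) : 'M[C]_2 :=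
  (phi R 0 *m adj x0 + phi R 1 *m adj x1) *m Filt R.

Lemma bell_kernel_PsiP :
  bell_kernel (ket1z R) (ket0z R) = bloch (rc (1 / 2)) (rc 0) (rc 0).
Proof.
transitivity (bloch (rc ((a ^+ 2 + b ^+ 2) / 2)) (rc 0) (rc 0)
              + rc ((a * b *+ 2 - (b ^+ 2 - a ^+ 2)) / 2) *: 1%:M).
  rewrite /bell_kernel phi_0E phi_1E FiltE ket0zE ket1zE !cv2_outer conjc0 conjc1.
  by rewrite mx2_1 !(mx2_add, mx2_mul, mx2_scale) /rc; congr mx2; field.
rewrite alpha2Dbeta2 alphaMbeta_mulr2n beta2Balpha2 subrr mul0r.
by rewrite /rc rmorph0 scale0r addr0.
Qed.

Lemma bell_kernel_PsiM :
  bell_kernel (ket1z R) (- ket0z R) = bloch (rc 0) (rc (- 1 / 2)) (rc s).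
Proof.
transitivity (bloch (rc 0) (rc (- (a ^+ 2 + b ^+ 2) / 2))
                    (rc ((a * b *+ 2 + (b ^+ 2 - a ^+ 2)) / 2))).
  rewrite /bell_kernel phi_0E phi_1E FiltE ket0zE ket1zE cv2_opp !cv2_outer.
  rewrite conjc0 conjc1 rmorphN1 oppr0 rmorph0.
  by rewrite !(mx2_add, mx2_mul) /rc; congr mx2; field.
rewrite alpha2Dbeta2 alphaMbeta_mulr2n beta2Balpha2.
by rewrite mulrDl -splitr.
Qed.

Lemma bell_kernel_PhiM :
  bell_kernel (ket0z R) (- ket1z R) = bloch (rc 0) (rc s) (rc (- 1 / 2)).
Proof.
transitivity (bloch (rc 0) (rc ((a * b *+ 2 + (b ^+ 2 - a ^+ 2)) / 2))
                    (rc (- (a ^+ 2 + b ^+ 2) / 2))).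
  rewrite /bell_kernel phi_0E phi_1E FiltE ket0zE ket1zE cv2_opp !cv2_outer.
  rewrite conjc0 conjc1 rmorphN1 oppr0 rmorph0.
  by rewrite !(mx2_add, mx2_mul) /rc; congr mx2; field.
rewrite alpha2Dbeta2 alphaMbeta_mulr2n beta2Balpha2.
by rewrite mulrDl -splitr.
Qed.

Lemma Rot_conj_bloch (x y z : C) : Rot R * bloch x y z * (Rot R)^-1 = bloch (- y) x z.
Proof.
rewrite RotV RotE -!scalerAl -scalerAr scalerA rc_invsqrt2_sqr /bloch.
by rewrite -!mulmxE !mx2_mul mx2_scale; congr mx2; field.
Qed.

Lemma Rot_conjS k (X : 'M[C]_2) :
  Rot R ^+ k.+1 * X * Rot R ^- k.+1 = Rot R * (Rot R ^+ k * X * Rot R ^- k) * (Rot R)^-1.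
Proof. by rewrite -!exprVn exprS exprSr !mulrA. Qed.

Lemma mxtrace_mul_bloch (M : 'M[C]_2) x y z :
  \tr (M * bloch x y z) = x * (M 0 1 + M 1 0) + y * (M 0 0 - M 1 1) + z * (M 1 0 - M 0 1).
Proof. by rewrite {1}(mx2_eta M) -mulmxE mx2_mul mxtrace_mx2; ring. Qed.

Lemma twirl_bloch (M : 'M[C]_2) (x y z : R) :
  \sum_(k < 4) `|\tr (M * (Rot R ^+ k * bloch (rc x) (rc y) (rc z) * Rot R ^- k))| ^+ 2
  = rc ((x ^+ 2 + y ^+ 2) *+ 2) * (`|M 0 1 + M 1 0| ^+ 2 + `|M 0 0 - M 1 1| ^+ 2)
    + rc (z ^+ 2 *+ 4) * `|M 1 0 - M 0 1| ^+ 2.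
Proof.
rewrite !big_ord_recr big_ord0 /= add0r !Rot_conjS expr0 invr1 mul1r mulr1.
rewrite !Rot_conj_bloch opprK !mxtrace_mul_bloch !normCK.
(* [conjCD] etc. keep the head [Num.conj], so that [conjC_rc] still applies. *)
by rewrite !(conjCD, conjCN, conjCM, conjC_rc) /rc; ring.
Qed.

Section Expectations.
Context {I : finType} (E : I -> 'M[C]_2).

(* With E f = e0 + ex σ_x + ey σ_y + ez σ_z, these are 4 Σ_f (|ex|^2 + |ez|^2)
   and 4 Σ_f |ey|^2. *)
Definition weightXZ : C :=
  \sum_f (`|E f 0 1 + E f 1 0| ^+ 2 + `|E f 0 0 - E f 1 1| ^+ 2).

Definition weightY : C := \sum_f `|E f 1 0 - E f 0 1| ^+ 2.

Lemma weightXZ_ge0 : 0 <= weightXZ.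
Proof. by apply: sumr_ge0 => f _; rewrite addr_ge0 ?exprn_ge0. Qed.

Lemma weightY_ge0 : 0 <= weightY.
Proof. by apply: sumr_ge0 => f _; rewrite exprn_ge0. Qed.

Lemma expect_rho_bell {x0 x1 : 'cV[C]_2} {x y z : R} :
  bell_kernel x0 x1 = bloch (rc x) (rc y) (rc z) ->
  expect (rc s *: (ket0z R *t x0 + ket1z R *t x1)) (rho E)
  = rc ((x ^+ 2 + y ^+ 2) / 2) * weightXZ + rc (z ^+ 2) * weightY.
Proof.
move=> kernelE; rewrite /rho exchange_big expect_sum /weightXZ /weightY.
rewrite !mulr_sumr -big_split; apply: eq_bigr => f _.
transitivity (4^-1 * \sum_(k < 4)
  `|\tr (E f * (Rot R ^+ k * bloch (rc x) (rc y) (rc z) * Rot R ^- k))| ^+ 2).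
  rewrite expect_sum mulr_sumr; apply: eq_bigr => k _ /=.
  rewrite expect_sandwich bell_amplitude -kernelE /bell_kernel.
  rewrite normrM exprMn normfV normr_nat -mulmxE; congr (_ * _); first by field.
  by rewrite -!mulmxA mulmxA mxtrace_mulC -!mulmxA.
by rewrite twirl_bloch /rc /=; field.
Qed.

Lemma expect_PsiP : expect (PsiP R) (rho E) = weightXZ / 8.
Proof. by rewrite (expect_rho_bell bell_kernel_PsiP) /rc; field. Qed.

Lemma expect_PsiM : expect (PsiM R) (rho E) = weightXZ / 8 + weightY / 2.
Proof.
by rewrite /PsiM -tensmxN (expect_rho_bell bell_kernel_PsiM) sqr_invsqrt2 /rc; field.
Qed.

Lemma expect_PhiM : expect (PhiM R) (rho E) = (weightXZ + weightY) / 4.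
Proof.
by rewrite /PhiM -tensmxN (expect_rho_bell bell_kernel_PhiM) sqr_invsqrt2 /rc; field.
Qed.

End Expectations.
End Twirl.

Theorem theorem1 (R : realType) (I : finType) (E : I -> 'M[R[i]]_2) :
  let rh := rho E in
  0 < \tr rh ->
  let pX := expect (PsiP R) rh / \tr rh in
  let pZ := expect (PhiM R) rh / \tr rh in
  let pY := expect (PsiM R) rh / \tr rh in
  let eb := pX + pY in
  let a := pY in
  [/\ pX = eb - a, pZ = 3 / 2 * eb - a, pY = a & eb / 2 <= a <= eb].
Proof.
move=> rh tr_gt0 pX pZ pY eb a.
have tr_neq0 : \tr rh != 0 by rewrite gt_eqF.
have eX : pX = weightXZ E / 8 / \tr rh by rewrite /pX expect_PsiP.
have eY : pY = (weightXZ E / 8 + weightY E / 2) / \tr rh by rewrite /pY expect_PsiM.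
have eZ : pZ = (weightXZ E + weightY E) / 4 / \tr rh by rewrite /pZ expect_PhiM.
split; rewrite /a /eb ?addrK //.
  by rewrite eX eY eZ; field.
apply/andP; split; rewrite -subr_ge0.
  have -> : pY - (pX + pY) / 2 = weightY E / 4 / \tr rh by rewrite eX eY; field.
  by rewrite !divr_ge0 ?weightY_ge0 ?ltW.
by rewrite addrK eX !divr_ge0 ?weightXZ_ge0 ?ltW.
Qed.
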